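(* Let $n\in\mathbb{N}$, $\hbar\in{]0,\infty[}$, $\mu\in\mathbb{R}$, $k,\ell\in\mathbb{N}_0$ and $g\in\mathscr{P}^{\ell,\ell}(\mathbb{C}^{1+n})$. Then $\mathcal{J}^kg-\hbar^k\big(\tfrac{\mu}{\hbar}-\ell\big)_{\downarrow,k}\,g\in\langle\mathcal{J}-\mu\rangle$, where $\mathcal{J}^kg$ is the pointwise product and $\langle\mathcal{J}-\mu\rangle$ is the $^*$-ideal of $(\bigoplus_m\mathscr{P}^{m,m}(\mathbb{C}^{1+n}),\star_\hbar)$ generated by $\mathcal{J}-\mu\mathbb{1}$.
   Context: $\mathscr{P}^{k,\ell}(\mathbb{C}^{1+n})$ is the span of monomials $z^K\overline{z}^L$ with $K,L\in\mathbb{N}_0^{1+n}$, $|K|=k$, $|L|=\ell$. Wick product: $f\star_\hbar g=\sum_{K}\frac{\hbar^{|K|}}{K!}\frac{\partial^{|K|}f}{\partial\overline{z}^K}\frac{\partial^{|K|}g}{\partial z^K}$ ($K!=\prod K_i!$), involution pointwise complex conjugation. $\mathcal{J}=\sum_{j=0}^nz_j\overline{z_j}$. Falling factorial: $(x)_{\downarrow,k}=\prod_{j=0}^{k-1}(x-j)$. *)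

From HB Require Import structures.
From mathcomp Require Import all_boot all_order all_algebra.
From mathcomp Require Import reals.
From mathcomp.real_closed Require Import complex.
From mathcomp Require Import mpoly.
Set Implicit Arguments. Unset Strict Implicit. Unset Printing Implicit Defensive.
Import Order.TTheory GRing.Theory Num.Theory.
Local Open Scope ring_scope.
Local Open Scope complex_scope.

(* Polynomials in z_0..z_n, zbar_0..zbar_n over C = R[i] (R the reals):
   formal polynomials in 2(1+n) variables; the variable (lshift _ j) is z_j and
   (rshift _ j) is zbar_j.  Polynomial functions in z, zbar on C^{1+n} are in
   bijection with such formal polynomials. *)
Section Wick.
Variables (R : realType) (n : nat).
Local Notation C := (R[i]).
Local Notation N := (n.+1 + n.+1)%N.
Local Notation P := ({mpoly C[N]}).

Definition zv (j : 'I_n.+1) : 'I_N := lshift n.+1 j.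
Definition zbv (j : 'I_n.+1) : 'I_N := rshift n.+1 j.

Definition zdeg (m : 'X_{1..N}) : nat := (\sum_(j < n.+1) m (zv j))%N.
Definition zbdeg (m : 'X_{1..N}) : nat := (\sum_(j < n.+1) m (zbv j))%N.

Definition inPkl (k l : nat) (p : P) : Prop :=
  forall m, m \in msupp p -> zdeg m = k /\ zbdeg m = l.

Definition inPbal (p : P) : Prop :=
  forall m, m \in msupp p -> zdeg m = zbdeg m.

Definition dz (K : 'I_n.+1 -> nat) (p : P) : P :=
  foldr (fun j => iter (K j) (mderiv (zv j))) p (enum 'I_n.+1).
Definition dzb (K : 'I_n.+1 -> nat) (p : P) : P :=
  foldr (fun j => iter (K j) (mderiv (zbv j))) p (enum 'I_n.+1).

Definition mabs (K : 'I_n.+1 -> nat) : nat := (\sum_j K j)%N.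
Definition mfact (K : 'I_n.+1 -> nat) : nat := (\prod_j (K j)`!)%N.

(* Wick star product.  The sum over K in N_0^{1+n} is finite: if some K_j >=
   msize f then dzb K f = 0, so we sum over K with all K_j < msize f. *)
Definition wick (hbar : R) (f g : P) : P :=
  \sum_(K : {ffun 'I_n.+1 -> 'I_(msize f)})
     ((hbar ^+ mabs (fun j => K j) / (mfact (fun j => K j))%:R)%:C)
       *: (dzb (fun j => K j) f * dz (fun j => K j) g).

(* pointwise complex conjugation: conjugate coefficients and swap z <-> zbar *)
Definition swapv (i : 'I_N) : 'I_N :=
  match split i with inl j => zbv j | inr j => zv j end.
Definition pconj (p : P) : P :=
  map_mpoly (@conjc R) p \mPo [tuple 'X_(swapv i) | i < N].

Definition Jpoly : P := \sum_(j < n.+1) 'X_(zv j) * 'X_(zbv j).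

Inductive in_star_ideal (hbar : R) (a : P) : P -> Prop :=
  | sid_gen : in_star_ideal hbar a a
  | sid_zero : in_star_ideal hbar a 0
  | sid_add p q : in_star_ideal hbar a p -> in_star_ideal hbar a q ->
      in_star_ideal hbar a (p + q)
  | sid_scale (c : C) p : in_star_ideal hbar a p -> in_star_ideal hbar a (c *: p)
  | sid_mull b p : inPbal b -> in_star_ideal hbar a p ->
      in_star_ideal hbar a (wick hbar b p)
  | sid_mulr b p : inPbal b -> in_star_ideal hbar a p ->
      in_star_ideal hbar a (wick hbar p b)
  | sid_conj p : in_star_ideal hbar a p -> in_star_ideal hbar a (pconj p).

End Wick.

Definition falling (R : pzRingType) (x : R) (k : nat) : R :=
  \prod_(j < k) (x - j%:R).

(* Since J - mu has degree one in zbar, only the multi-indices K = 0 and K = e_j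
   contribute to the Wick product (J - mu) star g, and Euler's identity
   sum_j z_j d/dz_j g = l g for g in P^{l,l} turns it into (J - mu + hbar l) g.
   Hence J g = (mu - hbar l) g modulo the ideal, with J g in P^{l+1,l+1}; induction
   on k, using hbar^(k+1) (mu/hbar - l)_(k+1) = (mu - hbar l) hbar^k (mu/hbar - l - 1)_k,
   gives the claim. *)

From HB Require Import structures.
From mathcomp Require Import all_boot all_order all_algebra.
From mathcomp Require Import reals.
From mathcomp.real_closed Require Import complex.
From mathcomp Require Import mpoly.
From mathcomp Require Import ring.
Import Order.TTheory GRing.Theory Num.Theory.
Set Implicit Arguments. Unset Strict Implicit. Unset Printing Implicit Defensive.
Local Open Scope ring_scope.
Local Open Scope complex_scope.

Lemma sum_support_point_image (I J : finType) (V : nmodType) (F : I -> V) (z : I) (d : J -> I) :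
  injective d -> (forall j, d j != z) ->
  (forall i, i != z -> (forall j, i != d j) -> F i = 0) ->
  \sum_i F i = F z + \sum_j F (d j).
Proof.
move=> d_inj dz Fout; rewrite (bigD1 z) //=; congr (_ + _).
rewrite (bigID (mem (codom d))) /= [X in _ + X]big1 ?addr0; last first.
  move=> i /andP[iz notd]; apply: Fout => // j.
  by apply: contraNneq notd => ->; exact: codom_f.
rewrite (eq_bigl (mem (codom d))) => [|i]; last first.
  by rewrite andb_idl //= => /codomP[j ->]; exact: dz.
by rewrite -big_uniq ?codomE ?big_map ?big_enum //= map_inj_uniq ?enum_uniq.
Qed.

Lemma sum_nat_delta (I : finType) (j : I) : (\sum_i (j == i) = 1)%N.
Proof. by rewrite (bigD1 j) //= eqxx big1 // => i /negbTE; rewrite eq_sym => ->. Qed.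

Lemma falling_recl (R : pzRingType) (x : R) k : falling x k.+1 = x * falling (x - 1) k.
Proof.
rewrite /falling big_ord_recl subr0; congr (_ * _); apply: eq_bigr => j _.
by rewrite lift0 -nat1r opprD addrA.
Qed.

Section IteratedDerivatives.
Variables (R : comRingType) (k : nat).
Implicit Types (p : {mpoly R[k]}) (M : 'X_{1..k}).

Lemma foldr_iter_mderiv (I : Type) (v : I -> 'I_k) (K : I -> nat) (s : seq I) p :
  foldr (fun j => iter (K j) (mderiv (v j))) p s
  = mderivm (\sum_(j <- s) U_(v j) *+ K j)%MM p.
Proof.
elim: s => [|j s IH] /=; first by rewrite big_nil mderivm0m.
by rewrite IH big_cons addmC mderivmDm mderivn_iter.
Qed.

Lemma mderivm_subU1 M i p :
  (0 < M i)%N -> mderivm M p = mderivm (M - U_(i))%MM (mderiv i p).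
Proof. by move=> Mi; rewrite -mderivmU1m -mderivmDm addmC submK // lep1mP -lt0n. Qed.

Lemma mderivXU i x : mderiv i ('X_x : {mpoly R[k]}) = (x == i)%:R.
Proof.
rewrite mderivX mnm1E; case: eqP => [->|_]; last by rewrite scale0r.
by rewrite -{1}[U_(i)%MM]add0m addmK mpolyX0 scale1r.
Qed.

Lemma mderiv_msize_gt1 i p : mderiv i p != 0 -> (1 < msize p)%N.
Proof. by rewrite ltnNge; apply: contra => /msize1_polyC ->; rewrite mderivC. Qed.

End IteratedDerivatives.

Lemma zv_inj {n} : injective (@zv n). Proof. exact: lshift_inj. Qed.
Lemma zbv_inj {n} : injective (@zbv n). Proof. exact: rshift_inj. Qed.

Section Coordinates.
Variables (R : realType) (n : nat).
Local Notation N := (n.+1 + n.+1)%N.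
Local Notation P := {mpoly R[i][N]}.
Implicit Types (m : 'X_{1..N}).

Lemma zv_neq_zbv i j : zv i != zbv j :> 'I_N.
Proof.
by apply/eqP => /(congr1 val) /= e; have := ltn_ord i; rewrite e ltnNge leq_addr.
Qed.

Lemma dz_mderivm K (p : P) : dz K p = mderivm (\sum_j U_(zv j) *+ K j)%MM p.
Proof. by rewrite /dz foldr_iter_mderiv big_enum. Qed.

Lemma dzb_mderivm K (p : P) : dzb K p = mderivm (\sum_j U_(zbv j) *+ K j)%MM p.
Proof. by rewrite /dzb foldr_iter_mderiv big_enum. Qed.

Lemma mnm_sum_zbvE (K : 'I_n.+1 -> nat) x :
  (\sum_j U_(zbv j) *+ K j)%MM (zbv x) = K x.
Proof.
rewrite mnm_sumE (bigD1 x) //= big1 => [|j /negbTE jx].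
  by rewrite mulmnE mnm1E eqxx mul1n addn0.
by rewrite mulmnE mnm1E (inj_eq zbv_inj) jx.
Qed.

Lemma mderiv_zbv_J i : mderiv (zbv i) (Jpoly R n) = 'X_(zv i).
Proof.
rewrite /Jpoly raddf_sum (bigD1 i) //= big1 => [|j /negbTE ji].
  by rewrite mderivM !mderivXU (negbTE (zv_neq_zbv _ _)) eqxx mul0r add0r mulr1 addr0.
rewrite mderivM !mderivXU (negbTE (zv_neq_zbv _ _)) (inj_eq zbv_inj) ji.
by rewrite mul0r mulr0 addr0.
Qed.

Lemma zdegD m1 m2 : zdeg (m1 + m2)%MM = (zdeg m1 + zdeg m2)%N.
Proof. by rewrite /zdeg -big_split; apply: eq_bigr => i _; rewrite mnmDE. Qed.

Lemma zbdegD m1 m2 : zbdeg (m1 + m2)%MM = (zbdeg m1 + zbdeg m2)%N.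
Proof. by rewrite /zbdeg -big_split; apply: eq_bigr => i _; rewrite mnmDE. Qed.

Lemma inPkl0 k l : inPkl k l (0 : P).
Proof. by move=> m; rewrite msupp0. Qed.

Lemma inPklD k l (p q : P) : inPkl k l p -> inPkl k l q -> inPkl k l (p + q).
Proof. by move=> hp hq m /msuppD_le; rewrite mem_cat => /orP[/hp|/hq]. Qed.

Lemma inPklM k1 l1 k2 l2 (p q : P) :
  inPkl k1 l1 p -> inPkl k2 l2 q -> inPkl (k1 + k2) (l1 + l2) (p * q).
Proof.
move=> hp hq m /msuppM_le /allpairsP [[m1 m2] /= [/hp[k1E l1E] /hq[k2E l2E] ->]].
by rewrite zdegD zbdegD k1E l1E k2E l2E.
Qed.

Lemma inPkl_Xzv j : inPkl 1 0 ('X_(zv j) : P).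
Proof.
move=> m; rewrite msuppX inE => /eqP ->; rewrite /zdeg /zbdeg.
under eq_bigr do rewrite mnm1E (inj_eq zv_inj).
by rewrite sum_nat_delta big1 // => i _; rewrite mnm1E (negbTE (zv_neq_zbv _ _)).
Qed.

Lemma inPkl_Xzbv j : inPkl 0 1 ('X_(zbv j) : P).
Proof.
move=> m; rewrite msuppX inE => /eqP ->; rewrite /zdeg /zbdeg.
under [X in (_ /\ X = _)]eq_bigr do rewrite mnm1E (inj_eq zbv_inj).
by rewrite sum_nat_delta big1 // => i _; rewrite mnm1E eq_sym (negbTE (zv_neq_zbv _ _)).
Qed.

Lemma inPkl_J : inPkl 1 1 (Jpoly R n).
Proof.
apply: big_ind => [|p q|j _]; [exact: inPkl0 | exact: inPklD |].
by move: (inPklM (inPkl_Xzv (j := j)) (inPkl_Xzbv (j := j))); rewrite addn0.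
Qed.

Lemma inPkl_bal l (p : P) : inPkl l l p -> inPbal p.
Proof. by move=> hp m /hp[-> ->]. Qed.

Lemma euler_mpolyX m :
  \sum_j 'X_(zv j) * mderiv (zv j) ('X_[m] : P) = (zdeg m)%:R *: 'X_[m].
Proof.
rewrite /zdeg natr_sum scaler_suml; apply: eq_bigr => j _.
rewrite mderivX -scalerAr; have [->|mj] := posnP (m (zv j)); first by rewrite !scale0r.
by rewrite -mpolyXD addmC submK // lep1mP -lt0n.
Qed.

Lemma euler_homog l (g : P) : (forall m, m \in msupp g -> zdeg m = l) ->
  \sum_j 'X_(zv j) * mderiv (zv j) g = l%:R *: g.
Proof.
move=> gl; rewrite [in RHS](mpolyE g) [in LHS](mpolyE g) scaler_sumr.
under eq_bigr => j _ do rewrite raddf_sum mulr_sumr.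
rewrite exchange_big /= !big_seq; apply: eq_bigr => m /gl <-.
under eq_bigr => j _ do rewrite mderivZ -scalerAr.
by rewrite -scaler_sumr euler_mpolyX !scalerA mulrC.
Qed.

End Coordinates.

Section WickJmu.
Variables (R : realType) (n : nat) (hbar mu : R).
Local Notation N := (n.+1 + n.+1)%N.
Local Notation P := {mpoly R[i][N]}.
Local Notation Jmu := (Jpoly R n - (mu%:C)%:MP).

Lemma mderiv_zbv_Jmu i : mderiv (zbv i) Jmu = 'X_(zv i).
Proof. by rewrite mderivB mderivC subr0 mderiv_zbv_J. Qed.

Lemma msize_Jmu_gt1 : (1 < msize Jmu)%N.
Proof.
apply: (@mderiv_msize_gt1 _ _ (zbv ord0)); rewrite mderiv_zbv_Jmu.
apply/eqP => /(congr1 (mcoeff U_(zv ord0))).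
by rewrite mcoeffX eqxx mcoeff0 => /eqP; rewrite oner_eq0.
Qed.

Local Notation index := {ffun 'I_n.+1 -> 'I_(msize Jmu)}.

Definition zero_index : index := [ffun=> Ordinal (ltnW msize_Jmu_gt1)].
Definition unit_index j : index :=
  [ffun i => if i == j then Ordinal msize_Jmu_gt1 else Ordinal (ltnW msize_Jmu_gt1)].

Lemma zero_indexE i : zero_index i = 0%N :> nat.
Proof. by rewrite ffunE. Qed.

Lemma unit_indexE j i : unit_index j i = (i == j) :> nat.
Proof. by rewrite ffunE; case: eqP. Qed.

Lemma unit_index_inj : injective unit_index.
Proof.
move=> j j' /ffunP /(_ j) /(congr1 (@nat_of_ord _)).
by rewrite !unit_indexE eqxx; case: eqP.
Qed.

Lemma unit_index_neq0 j : unit_index j != zero_index.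
Proof.
apply/eqP => /ffunP /(_ j) /(congr1 (@nat_of_ord _)).
by rewrite unit_indexE zero_indexE eqxx.
Qed.

Definition wick_term (g : P) (K : index) : P :=
  ((hbar ^+ mabs (fun j => K j) / (mfact (fun j => K j))%:R)%:C)
    *: (dzb (fun j => K j) Jmu * dz (fun j => K j) g).

Lemma wick_term_zero g : wick_term g zero_index = Jmu * g.
Proof.
have M0 (v : 'I_n.+1 -> 'I_N) : (\sum_j U_(v j) *+ zero_index j)%MM = 0%MM.
  by rewrite big1 // => j _; rewrite zero_indexE mulm0n.
rewrite /wick_term dzb_mderivm dz_mderivm !M0 !mderivm0m /mabs /mfact.
rewrite big1 => [|j _]; last by rewrite zero_indexE.
rewrite big1 => [|j _]; last by rewrite zero_indexE.
by rewrite expr0 divr1 rmorph1 scale1r.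
Qed.

Lemma wick_term_unit g j :
  wick_term g (unit_index j) = hbar%:C *: ('X_(zv j) * mderiv (zv j) g).
Proof.
have M1 (v : 'I_n.+1 -> 'I_N) : (\sum_i U_(v i) *+ unit_index j i = U_(v j))%MM.
  rewrite (bigD1 j) //= big1 => [|i /negbTE ij]; last by rewrite unit_indexE ij mulm0n.
  by rewrite unit_indexE eqxx mulm1n addm0.
rewrite /wick_term dzb_mderivm dz_mderivm !M1 !mderivmU1m mderiv_zbv_Jmu /mabs /mfact.
have -> : (\sum_i unit_index j i = 1)%N.
  by rewrite -(sum_nat_delta j); apply: eq_bigr => i _; rewrite unit_indexE eq_sym.
have -> : (\prod_i (unit_index j i)`! = 1)%N.
  by rewrite big1 // => i _; rewrite unit_indexE; case: (i == j).
by rewrite expr1 divr1.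
Qed.

Lemma dzb_Jmu_eq0 (K : index) :
  K != zero_index -> (forall j, K != unit_index j) -> dzb (fun j => K j) Jmu = 0.
Proof.
(* An index of order at least two differentiates in some zbar_i, which turns J - mu
   into z_i, and then once more in some zbar_x, which kills z_i. *)
move=> K0 Kunit.
have [i Ki] : exists i, (0 < K i)%N.
  apply/existsP; apply: contraR K0 => /existsPn K0.
  apply/eqP/ffunP => j; apply: ord_inj; rewrite zero_indexE.
  by apply/eqP; rewrite -leqn0 leqNgt K0.
have [x Kx] : exists x, ((i == x) < K x)%N.
  apply/existsP; apply: contraR (Kunit i) => /existsPn Kle; apply/eqP/ffunP => x.
  apply: ord_inj; rewrite unit_indexE eq_sym; apply/eqP; rewrite eqn_leq leqNgt Kle /=.
  by case: eqP => [<-|].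
rewrite dzb_mderivm (mderivm_subU1 (i := zbv i)) ?mnm_sum_zbvE // mderiv_zbv_Jmu.
rewrite (mderivm_subU1 (i := zbv x)); last first.
  by rewrite mnmBE mnm_sum_zbvE mnm1E (inj_eq zbv_inj) subn_gt0.
by rewrite mderivXU (negbTE (zv_neq_zbv _ _)) raddf0.
Qed.

Lemma wick_Jmu g :
  wick hbar Jmu g = Jmu * g + hbar%:C *: \sum_j 'X_(zv j) * mderiv (zv j) g.
Proof.
transitivity (\sum_K wick_term g K); first by [].
rewrite (sum_support_point_image (z := zero_index) unit_index_inj unit_index_neq0).
  rewrite wick_term_zero scaler_sumr; congr (_ + _).
  by apply: eq_bigr => j _; exact: wick_term_unit.
by move=> K K0 Kunit; rewrite /wick_term dzb_Jmu_eq0 // mul0r scaler0.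
Qed.

Lemma J_mul_sub_in_star_ideal l g : inPkl l l g ->
  in_star_ideal hbar Jmu (Jpoly R n * g - (mu - hbar * l%:R)%:C *: g).
Proof.
move=> gl; have := sid_mulr (inPkl_bal gl) (sid_gen hbar Jmu).
rewrite wick_Jmu (euler_homog (l := l)) => [|m /gl[]//].
suff -> : Jpoly R n * g - (mu - hbar * l%:R)%:C *: g
          = Jmu * g + hbar%:C *: (l%:R *: g) by [].
by rewrite -!mul_mpolyC !rmorphB !rmorphM /= !rmorph_nat; ring.
Qed.

End WickJmu.

Lemma scaled_falling_recl (F : fieldType) (h x : F) l k : h != 0 ->
  h ^+ k.+1 * falling (x / h - l%:R) k.+1
  = h ^+ k * falling (x / h - l.+1%:R) k * (x - h * l%:R).
Proof. by move=> h0; rewrite falling_recl -natr1 opprD addrA exprS; field. Qed.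

Theorem lemma4p9 (R : realType) (n : nat) (hbar mu : R) (k l : nat)
  (g : {mpoly R[i][n.+1 + n.+1]}) :
  (0 < n)%N -> 0 < hbar -> inPkl l l g ->
  in_star_ideal hbar (Jpoly R n - (mu%:C)%:MP)
    (Jpoly R n ^+ k * g
       - ((hbar ^+ k * falling (mu / hbar - l%:R) k)%:C) *: g).
Proof.
move=> _ /lt0r_neq0 hbar0; elim: k l g => [|k IHk] l g gl.
  by rewrite expr0 mul1r /falling big_ord0 mulr1 rmorph1 scale1r subrr; exact: sid_zero.
rewrite scaled_falling_recl //.
set c := hbar ^+ k * _; set d := mu - _.
have Jg : inPkl l.+1 l.+1 (Jpoly R n * g) := inPklM (@inPkl_J R n) gl.
have := sid_add (IHk _ _ Jg) (sid_scale c%:C (J_mul_sub_in_star_ideal hbar mu gl)).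
suff -> : Jpoly R n ^+ k.+1 * g - (c * d)%:C *: g
  = Jpoly R n ^+ k * (Jpoly R n * g) - c%:C *: (Jpoly R n * g)
    + c%:C *: (Jpoly R n * g - d%:C *: g) by [].
by rewrite rmorphM -!mul_mpolyC rmorphM exprS; ring.
Qed.
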